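(* Let $\mathcal{T}$ be a single-elimination tournament with at least $2$ players and $N$ total brackets, let $R$ be a uniformly random bracket, and let $q_{\mathrm{pair}}=\min_{a,b\in P(\mathcal{T}),\,a\ne b}\Pr[R(x_{a,b})\in\{a,b\}]$. If $\sigma$ is a scoring system with distinct subset sums, then $\mathrm{res}(\mathcal{T},\sigma)=(1-q_{\mathrm{pair}})N+1$.
   Context: A single-elimination tournament is a finite directed graph $\mathcal{T}$ such that: (a) $\mathcal{T}$ has exactly one sink (vertex with no out-neighbours); (b) every non-sink vertex has exactly one out-neighbour; (c) $\mathcal{T}$ has no directed cycles; (d) $|N^-(v)|\ne 1$ for every vertex $v$, where $N^-(v)$ denotes the set of in-neighbours of $v$. The players $P(\mathcal{T})$ are the sources and the matches are $M(\mathcal{T})=V(\mathcal{T})\setminus P(\mathcal{T})$. For a vertex $u$, $P(u)$ is the set of players $a$ for which there is a directed walk from $a$ to $u$ (length $0$ allowed). For distinct players $a,b$, $x_{a,b}$ denotes the unique match $x$ having in-neighbours $u_a,u_b\in N^-(x)$ with $P(u_a)\cap\{a,b\}=\{a\}$ and $P(u_b)\cap\{a,b\}=\{b\}$ (such a match exists and is unique). A bracket is a function $B:V(\mathcal{T})\to P(\mathcal{T})$ with $B(a)=a$ for every player $a$ and $B(x)\in\{B(u):u\in N^-(x)\}$ for every match $x$. A scoring system is any function $\sigma:M(\mathcal{T})\to\mathbb{R}_{>0}$; it has distinct subset sums if for any two sets of matches $M,M'$, $\sum_{x\in M}\sigma(x)=\sum_{x\in M'}\sigma(x)$ implies $M=M'$.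 For brackets $B,B'$ let $\mathrm{score}_\sigma(B,B')=\sum_{x\in M(\mathcal{T}):\,B(x)=B'(x)}\sigma(x)$. A set of brackets $\mathcal{B}$ is $\sigma$-resolving if for every pair of distinct brackets $B\ne B'$ there is $B_i\in\mathcal{B}$ with $\mathrm{score}_\sigma(B_i,B)\ne\mathrm{score}_\sigma(B_i,B')$. $\mathrm{res}(\mathcal{T},\sigma)$ is the minimum $r$ such that every set of $r$ brackets is $\sigma$-resolving. *)

From HB Require Import structures.
From mathcomp Require Import all_boot all_order all_algebra.
From mathcomp Require Import reals.
Set Implicit Arguments. Unset Strict Implicit. Unset Printing Implicit Defensive.
Import Order.TTheory GRing.Theory Num.Theory.
Local Open Scope ring_scope.

Section Tournament.
Variables (V : finType) (E : rel V).
(* E u v : there is a directed edge u -> v (u is an in-neighbour of v). *)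

Definition sinkb (v : V) : bool := [forall w, ~~ E v w].

Definition is_tournament : Prop :=
  [/\ #|[set v | sinkb v]| = 1%N,
      (forall v, ~~ sinkb v -> #|[set w | E v w]| = 1%N),
      (forall u v, E u v -> ~~ connect E v u)
    & (forall v, #|[set u | E u v]| != 1%N)].

Definition playerb (v : V) : bool := [forall u, ~~ E u v].
Definition matchb (v : V) : bool := ~~ playerb v.
Definition players : {set V} := [set v | playerb v].

(* a \in P(u) for a player a iff there is a directed walk from a to u *)
Definition inP (u a : V) : bool := playerb a && connect E a u.

Definition is_xab (a b x : V) : bool :=
  matchb x &&
  [exists ua, exists ub,
     [&& E ua x, E ub x,
         inP ua a, ~~ inP ua b, inP ub b & ~~ inP ub a]].

(* x_{a,b} (exists and is unique for a tournament; default a otherwise) *)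
Definition xab (a b : V) : V := odflt a [pick x | is_xab a b x].

Definition is_bracket (B : {ffun V -> V}) : bool :=
  [forall v, playerb (B v)] &&
  [forall v, if playerb v then B v == v
             else [exists u, E u v && (B v == B u)]].

Definition brackets : {set {ffun V -> V}} := [set B | is_bracket B].

Variable R : realType.

Definition prob_pair (a b : V) : R :=
  #|[set B in brackets | (B (xab a b) == a) || (B (xab a b) == b)]|%:R
  / #|brackets|%:R.

(* minimum over ordered pairs of distinct players (the default 1 is irrelevant
   once there are at least two players, all probabilities being <= 1) *)
Definition q_pair : R :=
  \big[Num.min/1]_(p : V * V | [&& playerb p.1, playerb p.2 & p.1 != p.2])
     prob_pair p.1 p.2.

Variable sigma : V -> R.

Definition scoring_system : Prop := forall x, matchb x -> 0 < sigma x.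

Definition distinct_subset_sums : Prop :=
  forall M M' : {set V}, {subset M <= matchb} -> {subset M' <= matchb} ->
    \sum_(x in M) sigma x = \sum_(x in M') sigma x -> M = M'.

Definition score (B B' : {ffun V -> V}) : R :=
  \sum_(x | matchb x && (B x == B' x)) sigma x.

Definition resolving (S : {set {ffun V -> V}}) : Prop :=
  forall B B', B \in brackets -> B' \in brackets -> B <> B' ->
    exists2 Bi, Bi \in S & score Bi B <> score Bi B'.

Definition is_res (r : nat) : Prop :=
  (forall S : {set {ffun V -> V}}, S \subset brackets -> #|S| = r -> resolving S) /\
  (forall r', (r' < r)%N ->
     ~ (forall S : {set {ffun V -> V}}, S \subset brackets -> #|S| = r' -> resolving S)).

End Tournament.

From HB Require Import structures.
From mathcomp Require Import all_boot all_order all_algebra.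
From mathcomp Require Import reals zify.
Import Order.TTheory GRing.Theory Num.Theory.
Set Implicit Arguments. Unset Strict Implicit. Unset Printing Implicit Defensive.

(* If two brackets B <> B' differ, let x be a lowest match on which they differ: its
   in-neighbours carry the same winners in B and B', so x = x_{a,b} with a = B x and
   b = B' x.  Distinct subset sums make equal scores against C mean equal sets of
   matches on which C agrees with B and with B', so C(x_{a,b}) is neither a nor b.
   Conversely, seed a first and b second (resp. b first and a second), everyone else
   identically, and let the better seed win every match: the two resulting brackets
   differ exactly on the matches above x_{a,b}, so every C with C(x_{a,b}) outside
   {a,b} scores them equally.  Hence a set of brackets is resolving iff for every pair
   {a,b} it contains some C with C(x_{a,b}) in {a,b}, and counting the brackets that
   avoid the worst pair gives res = N - min_{a,b} #{C | C(x_{a,b}) in {a,b}} + 1. *)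

Lemma exists_subset_card (T : finType) (A : {set T}) n :
  n <= #|A| -> exists2 S : {set T}, S \subset A & #|S| = n.
Proof.
case/card_geqP => s [uniq_s size_s sA]; exists [set x in s].
  by apply/subsetP => x; rewrite inE => /sA.
by rewrite cardsE (card_uniqP uniq_s).
Qed.

Lemma exists_common_of_card (T : finType) (U A B : {set T}) :
  A \subset U -> B \subset U -> #|U| < #|A| + #|B| -> exists2 x, x \in A & x \in B.
Proof.
move=> sAU sBU ltU.
have : A :|: B \subset U by rewrite subUset sAU sBU.
move/subset_leq_card; have := cardsUI A B => cardUI leU.
have /card_gt0P [x] : 0 < #|A :&: B| by lia.
by rewrite inE => /andP [xA xB]; exists x.
Qed.

Section Tournament.
Variables (V : finType) (E : rel V).

Lemma connect_first_edge u v :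
  connect E u v -> u = v \/ exists2 w, E u w & connect E w v.
Proof.
move=> /connectP [[|w p]] /=; first by left.
by move=> /andP [Euw pw] ->; right; exists w => //; apply/connectP; exists p.
Qed.

Lemma connect_last_edge u v :
  connect E u v -> u = v \/ exists2 w, connect E u w & E w v.
Proof.
move=> /connectP [p]; case/lastP: p => [|p w] /=; first by left.
rewrite rcons_path last_rcons => /andP [pw Ew] ->; right.
by exists (last u p) => //; apply/connectP; exists p.
Qed.

Lemma player_edgeF a u : playerb E a -> E u a = false.
Proof. by move=> /forallP /(_ u) /negbTE. Qed.

Lemma connect_player a u : playerb E a -> connect E u a -> u = a.
Proof.
by move=> pa /connect_last_edge [//|[w _]]; rewrite player_edgeF.
Qed.

Lemma exists_in_edge v : ~~ playerb E v -> exists u, E u v.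
Proof. by move=> /forallPn [u]; rewrite negbK; exists u. Qed.

Definition ancestors v : {set V} := [set u | connect E u v].

Hypothesis tourE : is_tournament E.

Lemma out_edge_uniq u v w : E u v -> E u w -> v = w.
Proof.
case: tourE => _ out1 _ _ Euv Euw.
have /out1 out1u : ~~ sinkb E u by apply/forallPn; exists v; rewrite negbK.
have /card_le1_eqP eq_out : #|[set w | E u w]| <= 1 by rewrite out1u.
by apply: eq_out; rewrite inE.
Qed.

Lemma edge_connectF u v : E u v -> connect E v u = false.
Proof. by case: tourE => _ _ acyc _ /acyc /negbTE. Qed.

Lemma connect_antisym u v : connect E u v -> connect E v u -> u = v.
Proof.
move=> /connect_first_edge [//|[w Euw cwv]] cvu.
by move: (connect_trans cwv cvu); rewrite (edge_connectF Euw).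
Qed.

Lemma ancestors_ltn u v : E u v -> #|ancestors u| < #|ancestors v|.
Proof.
move=> Euv; apply: proper_card; rewrite properE; apply/andP; split.
  by apply/subsetP => w; rewrite !inE => cwu; apply: connect_trans cwu (connect1 Euv).
by apply/subsetPn; exists v; rewrite !inE ?connect0 ?(edge_connectF Euv).
Qed.

Lemma ancestors_ind (P : V -> Prop) :
  (forall v, (forall u, E u v -> P u) -> P v) -> forall v, P v.
Proof.
move=> IH v; elim: {v}_.+1 {-2}v (ltnSn #|ancestors v|) => // n IHn v ltvn.
by apply: IH => u Euv; apply: IHn; apply: leq_trans (ancestors_ltn Euv) ltvn.
Qed.

Lemma connect_total a u v :
  connect E a u -> connect E a v -> connect E u v \/ connect E v u.
Proof.
move=> /connectP [p]; elim: p a => [|w p IH] a /=; first by move=> _ -> cav; left.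
move=> /andP [Eaw pw] lastu /connect_first_edge [<-|[w' Eaw' cw'v]].
  by right; apply/connectP; exists (w :: p) => //=; rewrite Eaw.
by rewrite -(out_edge_uniq Eaw Eaw') in cw'v; apply: IH pw lastu cw'v.
Qed.

Lemma in_edge_from_uniq a u w x :
  E u x -> E w x -> connect E a u -> connect E a w -> u = w.
Proof.
suff edge_connect_eq u' w' : E u' x -> E w' x -> connect E u' w' -> u' = w'.
  move=> Eux Ewx /connect_total cau /cau [] c; first exact: edge_connect_eq c.
  by apply/esym; apply: edge_connect_eq c.
move=> Eux Ewx /connect_first_edge [//|[y Euy cyw]].
by rewrite -(out_edge_uniq Eux Euy) (edge_connectF Ewx) in cyw.
Qed.

Lemma exists_sink v : exists2 s, sinkb E s & connect E v s.
Proof.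
have [s cvs maxs] := arg_maxnP (fun w => #|ancestors w|) (connect0 E v).
exists s => //; apply/forallP => w; apply/negP => Esw.
have := maxs w (connect_trans cvs (connect1 Esw)).
by rewrite /= leqNgt ancestors_ltn.
Qed.

Lemma sink_uniq s s' : sinkb E s -> sinkb E s' -> s = s'.
Proof.
case: tourE => sink1 _ _ _ ss ss'.
have /card_le1_eqP eq_sink : #|[set v | sinkb E v]| <= 1 by rewrite sink1.
by apply: eq_sink; rewrite inE.
Qed.

Lemma exists_common_descendant a b : exists v, connect E a v && connect E b v.
Proof.
have [s ss cas] := exists_sink a; have [s' ss' cbs'] := exists_sink b.
by exists s; rewrite cas (sink_uniq ss ss') cbs'.
Qed.

Lemma is_xab_connect a b x : is_xab E a b x -> connect E a x /\ connect E b x.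
Proof.
case/andP=> _ /existsP [ua /existsP [ub /and5P [Eua Eub /andP [_ cau] _]]].
case/andP=> /andP [_ cbub] _.
by split; [apply: connect_trans cau (connect1 Eua) | apply: connect_trans cbub (connect1 Eub)].
Qed.

Lemma xab_above a b x v :
  is_xab E a b x -> connect E a v -> connect E b v -> connect E x v.
Proof.
move=> xabx cav cbv; have [cax _] := is_xab_connect xabx.
case/andP: xabx => _ /existsP [ua /existsP [ub /and5P [Eua Eub /andP [pa cau] _]]].
case/andP=> /andP [_ cbub] /negP nau.
have [//|/connect_last_edge [<-|[w cvw Ewx]]] := connect_total cax cav.
  exact: connect0.
have wua := in_edge_from_uniq Ewx Eua (connect_trans cav cvw) cau.
have wub := in_edge_from_uniq Ewx Eub (connect_trans cbv cvw) cbub.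
by case: nau; rewrite -wub wua /inP pa.
Qed.

Lemma xabE a b x : is_xab E a b x -> xab E a b = x.
Proof.
move=> xabx; rewrite /xab; case: pickP => [y xaby | /(_ x)]; last by rewrite xabx.
have [cay cby] := is_xab_connect xaby; have [cax cbx] := is_xab_connect xabx.
by apply: connect_antisym; [apply: (xab_above xaby) | apply: (xab_above xabx)].
Qed.

Section Bracket.
Variable C : {ffun V -> V}.
Hypothesis bracketC : is_bracket E C.

Lemma bracket_player v : playerb E (C v).
Proof. by case/andP: bracketC => /forallP. Qed.

Lemma bracket_at_player v : playerb E v -> C v = v.
Proof. by case/andP: bracketC => _ /forallP /(_ v); case: (playerb E v) => // /eqP. Qed.

Lemma bracket_at_match v : ~~ playerb E v -> exists2 u, E u v & C v = C u.
Proof.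
case/andP: bracketC => _ /forallP /(_ v); case: (playerb E v) => //.
by case/existsP => u /andP [Euv /eqP]; exists u.
Qed.

Lemma bracket_connect v : connect E (C v) v.
Proof.
elim/ancestors_ind: v => v IH.
have [pv | /bracket_at_match [u Euv ->]] := boolP (playerb E v).
  by rewrite bracket_at_player ?connect0.
exact: connect_trans (IH u Euv) (connect1 Euv).
Qed.

Lemma bracket_mono w v : connect E w v -> connect E (C v) w -> C w = C v.
Proof.
elim/ancestors_ind: v => v IH /connect_last_edge [-> //|[u' cwu' Eu'v]] cw.
have pv : ~~ playerb E v by apply/negP => /(player_edgeF u'); rewrite Eu'v.
have [u Euv Cvu] := bracket_at_match pv.
have uu' : u = u'.
  apply: (in_edge_from_uniq Euv Eu'v (a := C v)); last exact: connect_trans cw cwu'.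
  by rewrite Cvu bracket_connect.
rewrite Cvu in cw *; apply: IH Euv _ cw; by rewrite uu'.
Qed.

End Bracket.

Lemma bracket_disagree B B' : is_bracket E B -> is_bracket E B' -> B != B' ->
  exists2 x, B x != B' x & is_xab E (B x) (B' x) x.
Proof.
move=> bB bB' neBB'.
have [y neqy] : exists y, B y != B' y.
  apply/existsP; apply: contraNT neBB' => /existsPn eqBB'.
  by apply/eqP/ffunP => y; apply/eqP/negbNE.
have [x neqx minx] := arg_minnP (fun v => #|ancestors v|) (neqy : (fun v => B v != B' v) y).
have below w : E w x -> B w = B' w.
  move=> Ewx; apply/eqP; apply: contraT => neqw.
  by have := minx w neqw; rewrite leqNgt ancestors_ltn.
have px : ~~ playerb E x.
  by apply: contra neqx => px; rewrite !bracket_at_player.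
have [u Eux Bxu] := bracket_at_match bB px; have [u' Eu'x Bxu'] := bracket_at_match bB' px.
have cu : connect E (B x) u by rewrite Bxu bracket_connect.
have cu' : connect E (B' x) u' by rewrite Bxu' bracket_connect.
exists x => //; rewrite /is_xab /matchb px; apply/existsP; exists u; apply/existsP; exists u'.
rewrite Eux Eu'x /inP !bracket_player // cu cu' /=.
apply/andP; split; apply/negP => c.
  by move: neqx; rewrite Bxu Bxu' -(in_edge_from_uniq Eux Eu'x c cu') below ?eqxx.
by move: neqx; rewrite Bxu Bxu' (in_edge_from_uniq Eux Eu'x cu c) below ?eqxx.
Qed.

Lemma exists_player_ancestor v : exists p, inP E v p.
Proof.
elim/ancestors_ind: v => v IH.
have [pv | /exists_in_edge [u /[dup] Euv /IH [p /andP [pp cpu]]]] := boolP (playerb E v).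
  by exists v; rewrite /inP pv connect0.
by exists p; rewrite /inP pp (connect_trans cpu (connect1 Euv)).
Qed.

Section Seeding.
Variable seed : V -> nat.

Definition seeded_bracket : {ffun V -> V} :=
  [ffun v => [arg min_(p < v | inP E v p) seed p]].

Lemma seeded_bracketP v :
  inP E v (seeded_bracket v) /\ forall q, inP E v q -> seed (seeded_bracket v) <= seed q.
Proof.
have [p vp] := exists_player_ancestor v.
rewrite ffunE /arg_min /extremum; case: pickP => [q /andP [vq /forall_inP minq] | none].
  by split=> // r /minq.
have [q vq minq] := arg_minnP seed vp.
by move: (none q); rewrite /= vq; case/negP; apply/forall_inP => r /minq.
Qed.

Hypothesis seed_inj : injective seed.

Lemma seeded_bracketE v p :
  inP E v p -> (forall q, inP E v q -> seed p <= seed q) -> seeded_bracket v = p.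
Proof.
have [vw minw] := seeded_bracketP v => vp minp.
by apply: seed_inj; apply/anti_leq; rewrite minw ?minp.
Qed.

Lemma seeded_bracket_is_bracket : is_bracket E seeded_bracket.
Proof.
apply/andP; split; apply/forallP => v; have [/andP [pw cwv] minw] := seeded_bracketP v.
  exact: pw.
have [pv | npv] := boolP (playerb E v).
  by rewrite -{2}(connect_player pv cwv).
have [ewv | [u cwu Euv]] := connect_last_edge cwv; first by rewrite -ewv pw in npv.
apply/existsP; exists u; rewrite Euv /=; apply/eqP/esym/seeded_bracketE.
  by rewrite /inP pw cwu.
move=> q /andP [pq cqu]; apply: minw.
by rewrite /inP pq (connect_trans cqu (connect1 Euv)).
Qed.

End Seeding.

Lemma eq_seeded_bracket seed1 seed2 v : injective seed2 ->
  (forall q, inP E v q -> seed1 q = seed2 q) ->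
  seeded_bracket seed1 v = seeded_bracket seed2 v.
Proof.
move=> inj2 eq12; have [vp minp] := seeded_bracketP seed1 v.
by apply/esym/seeded_bracketE => // q vq; rewrite -!eq12 ?minp.
Qed.

Definition pair_seed (a b p : V) : nat :=
  if p == a then 0 else if p == b then 1 else (enum_rank p).+2.

Lemma pair_seed_inj a b : injective (pair_seed a b).
Proof.
move=> p q; rewrite /pair_seed.
do 2![case: eqVneq => [->|?]]; do 2?[case: eqVneq => [->|?]] => //.
by move=> [/val_inj/enum_rank_inj].
Qed.

Definition pair_bracket (a b : V) : {ffun V -> V} := seeded_bracket (pair_seed a b).

Lemma pair_bracket_is_bracket a b : is_bracket E (pair_bracket a b).
Proof. exact/seeded_bracket_is_bracket/pair_seed_inj. Qed.

Lemma pair_bracket_first a b v :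
  playerb E a -> connect E a v -> pair_bracket a b v = a.
Proof.
move=> pa cav; apply: seeded_bracketE; first exact: pair_seed_inj.
  by rewrite /inP pa.
by move=> q _; rewrite /pair_seed eqxx.
Qed.

Lemma pair_bracket_second a b v :
  playerb E b -> ~~ connect E a v -> connect E b v -> pair_bracket a b v = b.
Proof.
move=> pb nav cbv; apply: seeded_bracketE; first exact: pair_seed_inj.
  by rewrite /inP pb.
have neqa q : connect E q v -> (q == a) = false by move=> cqv; apply: contraNF nav => /eqP <-.
by move=> q /andP [_ cqv]; rewrite /pair_seed !neqa // eqxx; case: ifP.
Qed.

Lemma pair_bracket_sym a b v :
  playerb E a -> playerb E b -> ~~ (connect E a v && connect E b v) ->
  pair_bracket a b v = pair_bracket b a v.
Proof.
move=> pa pb.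
have [cav | nav] := boolP (connect E a v); have [cbv | nbv] := boolP (connect E b v) => //= _.
- by rewrite pair_bracket_first // pair_bracket_second.
- by rewrite pair_bracket_second // pair_bracket_first.
apply: eq_seeded_bracket; first exact: pair_seed_inj.
move=> q /andP [_ cqv]; rewrite /pair_seed.
have [eqa | _] := eqVneq q a; first by rewrite -eqa cqv in nav.
by have [eqb | _] := eqVneq q b; first by rewrite -eqb cqv in nbv.
Qed.

Lemma pair_bracket_neq a b :
  playerb E a -> playerb E b -> a != b -> pair_bracket a b != pair_bracket b a.
Proof.
move=> pa pb neab; have [x /andP [cax cbx]] := exists_common_descendant a b.
apply/negP => /eqP/ffunP/(_ x).
by rewrite pair_bracket_first // pair_bracket_first //; apply/eqP.
Qed.

Lemma is_xab_xab a b :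
  playerb E a -> playerb E b -> a != b -> is_xab E a b (xab E a b).
Proof.
move=> pa pb neab.
case/bracket_disagree: (pair_bracket_neq pa pb neab) => [||x neqx];
  rewrite ?pair_bracket_is_bracket //.
have /andP [cax cbx] : connect E a x && connect E b x.
  by apply: contraNT neqx => ncx; rewrite pair_bracket_sym.
by rewrite !pair_bracket_first // => xabx; rewrite (xabE xabx).
Qed.

Definition backs_pair (C : {ffun V -> V}) (a b : V) : bool :=
  (C (xab E a b) == a) || (C (xab E a b) == b).

Definition pair_count (a b : V) : nat := #|[set C in brackets E | backs_pair C a b]|.

Variables (R : realType) (sigma : V -> R).

Lemma score_pair_bracket a b C :
  playerb E a -> playerb E b -> a != b -> is_bracket E C -> ~~ backs_pair C a b ->
  score E sigma C (pair_bracket a b) = score E sigma C (pair_bracket b a).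
Proof.
move=> pa pb neab bC nbacks; have xabx := is_xab_xab pa pb neab.
have [cax cbx] := is_xab_connect xabx.
apply: eq_bigl => v; congr (_ && _).
have [/andP [cav cbv] | ncv] := boolP (connect E a v && connect E b v); last first.
  by rewrite pair_bracket_sym.
have Cxab w : connect E w (xab E a b) -> C v = w -> C (xab E a b) = w.
  by move=> cw Cvw; rewrite (bracket_mono bC (xab_above xabx cav cbv)) // Cvw.
move: nbacks; rewrite /backs_pair !pair_bracket_first //.
have [/(Cxab a cax) -> | _] := eqVneq (C v) a; first by rewrite eqxx.
by have [/(Cxab b cbx) -> | //] := eqVneq (C v) b; rewrite eqxx orbT.
Qed.

Hypothesis sigma_dss : distinct_subset_sums E sigma.

Lemma score_eq_not_backs B B' : is_bracket E B -> is_bracket E B' -> B != B' ->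
  exists a b, [/\ playerb E a, playerb E b, a != b &
    forall C, score E sigma C B = score E sigma C B' -> ~~ backs_pair C a b].
Proof.
move=> bB bB' neBB'; have [x neqx xabx] := bracket_disagree bB bB' neBB'.
exists (B x), (B' x); split; rewrite ?bracket_player // => C eqscore.
pose agree (B0 : {ffun V -> V}) := [set v | matchb E v && (C v == B0 v)].
have scoreE B0 : score E sigma C B0 = (\sum_(v in agree B0) sigma v)%R.
  by apply: eq_bigl => v; rewrite inE.
have agree_match B0 : {subset agree B0 <= matchb E}.
  by move=> v; rewrite inE => /andP [].
have /setP/(_ x) : agree B = agree B'.
  by apply: sigma_dss; rewrite ?agree_match // -!scoreE.
rewrite !inE; case/andP: (xabx) => -> _ /= eqCx.
rewrite /backs_pair (xabE xabx); apply/negP => /orP [] /eqP Cx; move: eqCx.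
  by rewrite Cx eqxx (negbTE neqx).
by rewrite Cx eqxx eq_sym (negbTE neqx).
Qed.

Lemma resolvingP (S : {set {ffun V -> V}}) : S \subset brackets E ->
  resolving E sigma S <->
  forall a b, playerb E a -> playerb E b -> a != b -> exists2 C, C \in S & backs_pair C a b.
Proof.
move=> sSB; split=> [res a b pa pb neab | backsS B B'].
  have [/exists_inP [C CS backsC] | /exists_inPn nbacks] :=
    boolP [exists C in S, backs_pair C a b]; first by exists C.
  have inB c d : pair_bracket c d \in brackets E by rewrite inE pair_bracket_is_bracket.
  have [C CS []] := res _ _ (inB a b) (inB b a) (elimN eqP (pair_bracket_neq pa pb neab)).
  apply: score_pair_bracket; rewrite ?nbacks //.
  by move: (subsetP sSB C CS); rewrite inE.
rewrite !inE => bB bB' /eqP neBB'.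
have [a [b [pa pb neab notbacks]]] := score_eq_not_backs bB bB' neBB'.
have [C CS backsC] := backsS a b pa pb neab.
by exists C => // /notbacks; rewrite backsC.
Qed.

Lemma is_res_min_pair_count a0 b0 :
  playerb E a0 -> playerb E b0 -> a0 != b0 ->
  (forall a b, playerb E a -> playerb E b -> a != b -> pair_count a0 b0 <= pair_count a b) ->
  is_res E sigma (#|brackets E| - pair_count a0 b0).+1.
Proof.
move=> pa0 pb0 neab0 min_count.
have backers_sub a b : [set C in brackets E | backs_pair C a b] \subset brackets E.
  by apply/subsetP => C; rewrite inE => /andP [].
split=> [S sSB cardS | r lt_r all_res].
  apply/resolvingP => // a b pa pb neab.
  have [|C CS] := exists_common_of_card sSB (backers_sub a b).
    have := min_count a b pa pb neab; have := subset_leq_card (backers_sub a0 b0).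
    rewrite cardS /pair_count; lia.
  by rewrite inE => /andP [_ backsC]; exists C.
have [S sS cardS] : exists2 S : {set {ffun V -> V}},
    S \subset brackets E :\: [set C in brackets E | backs_pair C a0 b0] & #|S| = r.
  by apply: exists_subset_card; rewrite cardsDS // -ltnS.
have sSB : S \subset brackets E := subset_trans sS (subsetDl _ _).
have [C CS backsC] := (resolvingP sSB).1 (all_res S sSB cardS) a0 b0 pa0 pb0 neab0.
by move: (subsetP sS C CS); rewrite !inE backsC andbT andNb.
Qed.

End Tournament.

Unset Implicit Arguments.
Local Open Scope ring_scope.

Theorem lemmaA2 (V : finType) (E : rel V) (R : realType) (sigma : V -> R) :
  is_tournament E ->
  (2 <= #|players E|)%N ->
  scoring_system E sigma ->
  distinct_subset_sums E sigma ->
  exists r : nat, is_res E sigma r /\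
    (r%:R : R) = (1 - q_pair E R) * (#|brackets E|%:R) + 1.
Proof.
move=> tourE two_players _ dss.
have [a0 [b0 [pa0 pb0 neab0]]] := card_gt1P two_players.
rewrite !inE in pa0 pb0.
have N_gt0 : (0 < #|brackets E|)%N.
  by apply/card_gt0P; exists (pair_bracket E a0 b0); rewrite inE pair_bracket_is_bracket.
have count_le a b : (pair_count E a b <= #|brackets E|)%N.
  by apply/subset_leq_card/subsetP => C; rewrite inE => /andP [].
have prob_le1 (p : V * V) : prob_pair E R p.1 p.2 <= 1.
  by rewrite ler_pdivrMr ?ltr0n // mul1r ler_nat count_le.
rewrite /q_pair (bigmin_eq_arg 1 (a0, b0) _ _ _ (fun p _ => prob_le1 p)) /=;
  last by rewrite pa0 pb0 neab0.
case: arg_minP => [|[a b] /= /and3P [pa pb neab] min_prob]; first by rewrite /= pa0 pb0 neab0.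
exists (#|brackets E| - pair_count E a b).+1; split.
  apply: is_res_min_pair_count => // a' b' pa' pb' neab'.
  have := min_prob (a', b'); rewrite /= pa' pb' neab' => /(_ isT).
  by rewrite /prob_pair ler_pM2r ?invr_gt0 ?ltr0n // ler_nat.
rewrite /prob_pair -addn1 natrD natrB ?count_le // mulrBl mul1r divfK //.
by rewrite pnatr_eq0 -lt0n.
Qed.
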